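(* Let $G=G_1\times G_2$ be a product of commutative groups, $f_1\in\ell^1(G_1)$, $f_2\in\ell^1(G_2)$ nonnegative, and define $f\in\ell^1(G)$ by $f(x,y)=f_1(x)f_2(y)$. Let $1<p<\infty$. Then \[ \gamma_p(f)=\gamma_p(f_1)\gamma_p(f_2),\qquad \gamma'(f)\le\gamma'(f_1)\gamma'(f_2),\qquad \gamma''(f)\le\gamma''(f_1)\gamma''(f_2), \] each functional being computed in the group on which its argument lives.
   Context: For nonnegative functions $f,g$ on a commutative group $K$, $(f\star g)(x)=\max_t f(t)g(x-t)$ (max-convolution). The distribution function of $f$ is $F(t)=|\{x:f(x)\ge t\}|$ for $t>0$, and $g\sim h$ means $g,h$ have the same distribution function. For nonnegative $f\in\ell^1(K)$, $1/p+1/q=1$, and $g,h$ ranging over nonzero nonnegative functions in $\ell^1(K)$: $\gamma_p(f)=\inf_{g,h}\frac{\|f\star g\star h\|_1}{\|g\|_p\|h\|_q}$; $\gamma'(f)=\inf_{g\sim h}\frac{\|f\star g\star h\|_1}{\|g\|_2\|h\|_2}$; $\gamma''(f)=\inf_g\frac{\|f\star g\star g\|_1}{\|g\|_2^2}$. *)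

From HB Require Import structures.
From mathcomp Require Import all_boot all_order all_algebra.
From mathcomp Require Import all_classical all_reals all_analysis.
Set Implicit Arguments. Unset Strict Implicit. Unset Printing Implicit Defensive.
Import Order.TTheory GRing.Theory Num.Theory.
Local Open Scope classical_set_scope.
Local Open Scope ring_scope.

Section MaxConv.
Variables (R : realType) (K : zmodType).

Definition nonneg_l1 (f : K -> R) : Prop :=
  (forall x, 0 <= f x) /\ summable setT (fun x => (f x)%:E).

(* max-convolution (f * g)(x) = max_t f(t) g(x - t), taken as a supremum
   (the maximum is attained for nonnegative l^1 functions) *)
Definition maxconv (f g : K -> R) : K -> R :=
  fun x => sup [set f t * g (x - t) | t in [set: K]].

Definition l1norm (f : K -> R) : R := fine (\esum_(x in [set: K]) (`|f x|)%:E).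

Definition lpnorm (p : R) (f : K -> R) : R :=
  (fine (\esum_(x in [set: K]) (`|f x| `^ p)%:E)) `^ p^-1.

Definition same_distr (g h : K -> R) : Prop :=
  forall t : R, 0 < t -> card_eq [set x | t <= g x] [set x | t <= h x].

Definition conj_exp (p : R) : R := p / (p - 1).

Definition gamma_p (p : R) (f : K -> R) : \bar R :=
  ereal_inf [set ((l1norm (maxconv (maxconv f gh.1) gh.2))
                   / (lpnorm p gh.1 * lpnorm (conj_exp p) gh.2))%:E
            | gh in [set gh : (K -> R) * (K -> R) |
                     nonneg_l1 gh.1 /\ gh.1 <> (fun=> 0) /\
                     nonneg_l1 gh.2 /\ gh.2 <> (fun=> 0)]].

Definition gamma' (f : K -> R) : \bar R :=
  ereal_inf [set ((l1norm (maxconv (maxconv f gh.1) gh.2))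
                   / (lpnorm 2 gh.1 * lpnorm 2 gh.2))%:E
            | gh in [set gh : (K -> R) * (K -> R) |
                     nonneg_l1 gh.1 /\ gh.1 <> (fun=> 0) /\
                     nonneg_l1 gh.2 /\ gh.2 <> (fun=> 0) /\
                     same_distr gh.1 gh.2]].

Definition gamma'' (f : K -> R) : \bar R :=
  ereal_inf [set ((l1norm (maxconv (maxconv f g) g)) / (lpnorm 2 g ^+ 2))%:E
            | g in [set g : K -> R | nonneg_l1 g /\ g <> (fun=> 0)]].

End MaxConv.

Definition tensorf (R : realType) (G1 G2 : zmodType) (f1 : G1 -> R) (f2 : G2 -> R)
  : (G1 * G2)%type -> R := fun xy => f1 xy.1 * f2 xy.2.

From HB Require Import structures.
From mathcomp Require Import all_boot all_order all_algebra.
From mathcomp Require Import all_classical all_reals all_analysis.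
From mathcomp Require Import ring.
Import Order.TTheory GRing.Theory Num.Theory.
Local Open Scope classical_set_scope.
Local Open Scope ring_scope.
Set Implicit Arguments. Unset Strict Implicit. Unset Printing Implicit Defensive.

(* Write * for max-convolution.  Upper bounds: tensor products of admissible
   test functions are admissible (and preserve equality of distributions), while
   max-convolutions, l^1 and l^p norms all factor over tensor products, so every
   ratio for f1 x f2 built from tensor test functions is a product of ratios for
   f1 and f2.

   Lower bound for gamma_p: given g, h on G1 x G2, put G(b) = |g(., b)|_p and
   H(c) = |h(., c)|_q, so that |G|_p = |g|_p and |H|_q = |h|_q.  For a + b + c = y,
   f2(a) (f1 * g(., b) * h(., c)) is dominated by (f * g * h)(., y); summing over
   the first coordinate and applying gamma_p(f1) to the fibres gives
   gamma_p(f1) (f2 * G * H)(y) <= |(f * g * h)(., y)|_1, and summing over y and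
   applying gamma_p(f2) to G, H gives
   gamma_p(f1) gamma_p(f2) |g|_p |h|_q <= |f * g * h|_1. *)

Section NonnegativeSums.
Variable R : realType.
Local Open Scope ereal_scope.

Lemma esum_ge_term (T : choiceType) (a : T -> \bar R) t :
  (forall x, 0 <= a x) -> a t <= \esum_(x in [set: T]) a x.
Proof.
move=> a_ge0; apply: esum_ge; exists [set t]; last by rewrite fsbig_set1.
by split=> //; exact: finite_set1.
Qed.

Lemma esumZl (T : choiceType) (S : set T) (a : T -> \bar R) (c : R) :
  (0 <= c)%R -> (forall x, 0 <= a x) ->
  \esum_(x in S) (c%:E * a x) = c%:E * \esum_(x in S) a x.
Proof.
move=> c_ge0 a_ge0; rewrite /esum -ereal_supZl //; last first.
  by apply/set0P; exists 0, set0; [exact: fsets_set0 | rewrite fsbig_set0].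
congr ereal_sup; apply/seteqP; split => y.
  by move=> [X hX <-]; exists (\sum_(x \in X) a x); [exists X | rewrite ge0_mule_fsumr].
by move=> [_ [X hX <-] <-]; exists X => //; rewrite ge0_mule_fsumr.
Qed.

Lemma esum_pair (T1 T2 : choiceType) (a : T1 * T2 -> \bar R) :
  (forall z, 0 <= a z) ->
  \esum_(z in [set: T1 * T2]) a z =
  \esum_(x in [set: T1]) \esum_(y in [set: T2]) a (x, y).
Proof.
move=> a_ge0; rewrite (esum_esum (a := fun x y => a (x, y))) //.
have -> : [set: T1] `*`` (fun=> [set: T2]) = [set: T1 * T2] by apply/seteqP.
by apply: eq_esum => -[].
Qed.

Lemma esum_swap (T1 T2 : choiceType) (a : T1 -> T2 -> \bar R) :
  (forall x y, 0 <= a x y) ->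
  \esum_(x in [set: T1]) \esum_(y in [set: T2]) a x y =
  \esum_(y in [set: T2]) \esum_(x in [set: T1]) a x y.
Proof.
move=> a_ge0; rewrite -(esum_pair (a := fun z => a z.1 z.2)) //.
rewrite -(esum_pair (a := fun z => a z.2 z.1)) //.
rewrite (reindex_esum [set: T2 * T1] [set: T1 * T2] (fun z => (z.2, z.1))) //.
split=> //; first by move=> [? ?] [? ?] _ _ [-> ->].
by move=> [x y] _; exists (y, x).
Qed.

Lemma esum_translate (K : zmodType) (a : K -> \bar R) (t : K) :
  \esum_(x in [set: K]) a (x - t)%R = \esum_(x in [set: K]) a x.
Proof.
symmetry; apply: (reindex_esum [set: K] [set: K] (fun x => x - t)%R).
split=> //; first by move=> x y _ _ /addIr.
by move=> y _; exists (y + t)%R => //; rewrite addrK.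
Qed.

Lemma ge0_fineM (x y : \bar R) : 0 <= x -> 0 <= y -> fine (x * y) = (fine x * fine y)%R.
Proof.
case: x => [x| |]; case: y => [y| |] //=; rewrite ?lee_fin ?mulr0 ?mul0r //.
- rewrite le_eqVlt => /predU1P[<-|x_gt0] _; first by rewrite mul0e.
  by rewrite gt0_muley ?lte_fin.
- move=> _; rewrite le_eqVlt => /predU1P[<-|y_gt0]; first by rewrite mule0.
  by rewrite gt0_mulye ?lte_fin.
Qed.

End NonnegativeSums.

Section RealSums.
Variable R : realType.

Definition nonnegf (T : Type) (u : T -> R) := forall x, 0 <= u x.

Lemma exists_neq0 (T : Type) (u : T -> R) : u <> (fun=> 0) -> exists x, u x != 0.
Proof.
move=> u_neq0; have /existsNP [x /eqP ux_neq0] : ~ forall x, u x = 0.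
  by move=> u0; apply: u_neq0; apply/funext.
by exists x.
Qed.

Definition sumE (T : choiceType) (u : T -> R) : \bar R :=
  \esum_(x in [set: T]) (u x)%:E.

Lemma sumE_ge0 (T : choiceType) (u : T -> R) : nonnegf u -> (0 <= sumE u)%E.
Proof. by move=> u_ge0; apply: esum_ge0 => x _; rewrite lee_fin. Qed.

Lemma sumE_ge_term (T : choiceType) (u : T -> R) t :
  nonnegf u -> ((u t)%:E <= sumE u)%E.
Proof.
by move=> u_ge0; apply: (esum_ge_term (a := fun x => (u x)%:E)) => x; rewrite lee_fin.
Qed.

Lemma le_sumE (T : choiceType) (u v : T -> R) :
  (forall x, u x <= v x) -> (sumE u <= sumE v)%E.
Proof. by move=> le_uv; apply: le_esum => x _; rewrite lee_fin. Qed.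

Lemma sumEZ (T : choiceType) (u : T -> R) c : 0 <= c -> nonnegf u ->
  sumE (fun x => c * u x) = (c%:E * sumE u)%E.
Proof. by move=> c_ge0 u_ge0; rewrite -esumZl // => x; rewrite lee_fin. Qed.

Lemma sumE_tensor (T T' : choiceType) (u : T -> R) (v : T' -> R) :
  nonnegf u -> nonnegf v -> sumE (fun z : T * T' => u z.1 * v z.2) = (sumE u * sumE v)%E.
Proof.
move=> u_ge0 v_ge0; rewrite {1}/sumE esum_pair; last by move=> z; rewrite lee_fin mulr_ge0.
transitivity (\esum_(x in [set: T]) ((u x)%:E * sumE v))%E.
  by apply: eq_esum => x _; exact: (sumEZ (u_ge0 x) v_ge0).
case: (sumE v) (sumE_ge0 v_ge0) => [s| |] // s_ge0.
  transitivity (\esum_(x in [set: T]) (s%:E * (u x)%:E))%E.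
    by apply: eq_esum => x _; rewrite muleC.
  by rewrite esumZl 1?muleC // => x; rewrite lee_fin.
have [[t ut_gt0]|u0] := pselect (exists t, 0 < u t).
  rewrite gt0_muley; last by apply: lt_le_trans (sumE_ge_term t u_ge0); rewrite lte_fin.
  apply/eqP; rewrite eq_le leey /=.
  have := esum_ge_term (a := fun x => ((u x)%:E * +oo)%E) t.
  by rewrite gt0_muley ?lte_fin //; apply => x; rewrite mule_ge0 // lee_fin.
have {}u0 x : u x = 0.
  by apply/eqP; rewrite eq_le u_ge0 andbT leNgt; apply/negP => ?; apply: u0; exists x.
by rewrite /sumE !esum1 ?mul0e // => x _; rewrite u0 ?mul0e.
Qed.

End RealSums.

Section PowR.
Variable R : realType.

Lemma powRK (p x : R) : p != 0 -> 0 <= x -> (x `^ p) `^ p^-1 = x.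
Proof. by move=> p_neq0 x_ge0; rewrite -powRrM mulfV // powRr1. Qed.

Lemma powRVK (p x : R) : p != 0 -> 0 <= x -> (x `^ p^-1) `^ p = x.
Proof. by move=> p_neq0 x_ge0; rewrite -powRrM mulVf // powRr1. Qed.

End PowR.

Section Norms.
Variables (R : realType) (K : zmodType).
Implicit Types u v : K -> R.

Lemma l1normE u : nonnegf u -> l1norm u = fine (sumE u).
Proof. by move=> u_ge0; congr fine; apply: eq_esum => x _; rewrite ger0_norm. Qed.

Lemma l1norm_ge0 u : 0 <= l1norm u.
Proof. by rewrite fine_ge0 // esum_ge0. Qed.

Lemma nonneg_l1_sumE u : nonneg_l1 u -> sumE u = (l1norm u)%:E.
Proof.
move=> [u_ge0 u_sum]; rewrite l1normE // fineK // ge0_fin_numE ?sumE_ge0 //.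
by move: u_sum; rewrite /summable; under eq_esum do rewrite /= ger0_norm //.
Qed.

Lemma nonneg_l1_lty u : nonnegf u -> (sumE u < +oo)%E -> nonneg_l1 u.
Proof.
move=> u_ge0 u_lty; split => //; rewrite /summable.
by under eq_esum do rewrite /= ger0_norm //.
Qed.

Lemma l1norm_ge_term u x : nonneg_l1 u -> u x <= l1norm u.
Proof.
by move=> u_l1; rewrite -lee_fin -nonneg_l1_sumE //; apply: sumE_ge_term; case: u_l1.
Qed.

Lemma l1normZ_le u v c : 0 <= c -> nonneg_l1 u -> nonneg_l1 v ->
  (forall x, c * u x <= v x) -> c * l1norm u <= l1norm v.
Proof.
move=> c_ge0 u_l1 v_l1 le_uv; rewrite -lee_fin EFinM -!nonneg_l1_sumE //.
by rewrite -sumEZ //; [exact: le_sumE | case: u_l1].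
Qed.

Lemma lpnormE p u : nonnegf u -> lpnorm p u = fine (sumE (fun x => u x `^ p)) `^ p^-1.
Proof. by move=> u_ge0; congr (fine _ `^ _); apply: eq_esum => x _; rewrite ger0_norm. Qed.

Lemma lpnorm_ge0 p u : 0 <= lpnorm p u.
Proof. exact: powR_ge0. Qed.

Lemma lpnorm_cst0 p : p != 0 -> lpnorm p (fun _ : K => 0 : R) = 0.
Proof.
by move=> p_neq0; rewrite /lpnorm esum1 ?powR0 ?invr_neq0 // => x _; rewrite normr0 powR0.
Qed.

Lemma sumE_powR_le p u : nonneg_l1 u -> 1 <= p ->
  (sumE (fun x => (u x `^ p)%R) <= (l1norm u `^ p)%:E)%E.
Proof.
move=> u_l1 p_ge1; have u_ge0 : nonnegf u by case: u_l1.
have p_gt0 : 0 < p by apply: lt_le_trans p_ge1.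
have powR_le x : u x `^ p <= l1norm u `^ (p - 1) * u x.
  rewrite -mulr_powRB1 // mulrC ler_wpM2r //.
  by rewrite ge0_ler_powR ?subr_ge0 ?nnegrE ?l1norm_ge0 ?l1norm_ge_term.
apply: le_trans (le_sumE powR_le) _.
rewrite sumEZ ?powR_ge0 // nonneg_l1_sumE // -EFinM lee_fin mulrC mulr_powRB1 //.
exact: l1norm_ge0.
Qed.

Lemma sumE_powR_fin p u : nonneg_l1 u -> 1 <= p ->
  sumE (fun x => u x `^ p) = (fine (sumE (fun x => u x `^ p)))%:E.
Proof.
move=> u_l1 p_ge1; rewrite fineK // ge0_fin_numE; last first.
  by apply: sumE_ge0 => x; apply: powR_ge0.
by apply: le_lt_trans (sumE_powR_le u_l1 p_ge1) _; rewrite ltry.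
Qed.

Lemma lpnorm_le_l1norm p u : nonneg_l1 u -> 1 <= p -> lpnorm p u <= l1norm u.
Proof.
move=> u_l1 p_ge1; have u_ge0 : nonnegf u by case: u_l1.
have p_gt0 : 0 < p by apply: lt_le_trans p_ge1.
rewrite lpnormE // -[leRHS](powRK (lt0r_neq0 p_gt0) (l1norm_ge0 u)).
apply: ge0_ler_powR; rewrite ?nnegrE ?powR_ge0 //.
- by rewrite invr_ge0 ltW.
- by rewrite fine_ge0 // sumE_ge0 // => x; apply: powR_ge0.
- by rewrite -lee_fin -sumE_powR_fin // sumE_powR_le.
Qed.

Lemma lpnorm_gt0 p u : nonneg_l1 u -> 1 <= p -> u <> (fun=> 0) -> 0 < lpnorm p u.
Proof.
move=> u_l1 p_ge1 u_neq0; have u_ge0 : nonnegf u by case: u_l1.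
have [t ut_neq0] := exists_neq0 u_neq0.
rewrite lpnormE // powR_gt0 // -lte_fin -sumE_powR_fin //.
apply: lt_le_trans (sumE_ge_term t _); last by move=> x; apply: powR_ge0.
by rewrite lte_fin powR_gt0 // lt0r ut_neq0 u_ge0.
Qed.

End Norms.

Section TensorNorms.
Variables (R : realType) (K1 K2 : zmodType).
Variables (u : K1 -> R) (v : K2 -> R).

Lemma l1norm_tensor : nonnegf u -> nonnegf v ->
  l1norm (tensorf u v) = l1norm u * l1norm v.
Proof.
move=> u_ge0 v_ge0; rewrite !l1normE //; last by move=> z; apply: mulr_ge0.
by rewrite -ge0_fineM ?sumE_ge0 // -sumE_tensor.
Qed.

Lemma lpnorm_tensor p : nonnegf u -> nonnegf v ->
  lpnorm p (tensorf u v) = lpnorm p u * lpnorm p v.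
Proof.
move=> u_ge0 v_ge0; rewrite !lpnormE //; last by move=> z; apply: mulr_ge0.
have powR_ge0' (T : Type) (w : T -> R) : nonnegf (fun x => w x `^ p).
  by move=> x; apply: powR_ge0.
rewrite -powRM ?fine_ge0 ?sumE_ge0 // -ge0_fineM ?sumE_ge0 // -sumE_tensor //.
by congr (fine (sumE _) `^ _); apply/funext => z; rewrite /tensorf powRM.
Qed.

Lemma nonneg_l1_tensor : nonneg_l1 u -> nonneg_l1 v -> nonneg_l1 (tensorf u v).
Proof.
move=> u_l1 v_l1; have [u_ge0 _] := u_l1; have [v_ge0 _] := v_l1.
apply: nonneg_l1_lty; first by move=> z; apply: mulr_ge0.
by rewrite sumE_tensor // !nonneg_l1_sumE // -EFinM ltry.
Qed.

Lemma tensor_neq0 : u <> (fun=> 0) -> v <> (fun=> 0) -> tensorf u v <> (fun=> 0).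
Proof.
move=> /exists_neq0 [x ux_neq0] /exists_neq0 [y vy_neq0].
move=> /(congr1 (fun w => w (x, y))) /eqP.
by rewrite /tensorf mulf_eq0 (negPf ux_neq0) (negPf vy_neq0).
Qed.

End TensorNorms.

Section Cardinality.
Local Open Scope card_scope.

Lemma card_eq_fibers (T U : pointedType) (A B : set (T * U)) :
  (forall x, [set y | A (x, y)] #= [set y | B (x, y)]) -> A #= B.
Proof.
move=> AB; have /choice [F F_bij] :
    forall x, exists f, set_bij [set y | A (x, y)] [set y | B (x, y)] f.
  by move=> x; apply/card_set_bijP.
apply/card_set_bijP; exists (fun z => (z.1, F z.1 z.2)); split.
- by move=> [x y] Axy; have [+ _ _] := F_bij x; apply.
- move=> [x y] [x' y'] /set_mem Axy /set_mem Axy' [xx'].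
  move: Axy'; rewrite -{}xx' => Axy' /= Fyy'; congr (_, _).
  by have [_ + _] := F_bij x; apply; rewrite ?inE.
- move=> [x y] Bxy; have [_ _ /(_ y Bxy) [y' Ay' <-]] := F_bij x.
  by exists (x, y').
Qed.

Lemma card_eq_swap (T U : Type) (A : set (T * U)) : [set z : U * T | A (z.2, z.1)] #= A.
Proof.
have -> : [set z : U * T | A (z.2, z.1)] = (fun z => (z.2, z.1)) @` A.
  by apply/seteqP; split => [[u t] Atu|_ [[t u] Atu <-]] //; exists (t, u).
by apply: inj_card_eq => -[? ?] [? ?] _ _ [-> ->].
Qed.

End Cardinality.

Section Distribution.
Local Open Scope card_scope.
Variable R : realType.

Lemma same_distrZ (K : zmodType) (u v : K -> R) c : 0 <= c ->
  same_distr u v -> same_distr (fun x => c * u x) (fun x => c * v x).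
Proof.
rewrite le_eqVlt => /predU1P[<-|c_gt0] uv t t_gt0.
  have e (w : K -> R) : [set x | t <= 0 * w x] = set0.
    by apply/seteqP; split => x //=; rewrite mul0r leNgt t_gt0.
  by rewrite !e.
have e (w : K -> R) : [set x | t <= c * w x] = [set x | t / c <= w x].
  by apply/seteqP; split => x /=; rewrite ler_pdivrMr // mulrC.
by rewrite !e; apply: uv; rewrite divr_gt0.
Qed.

Lemma same_distr_tensor (K1 K2 : zmodType) (g1 h1 : K1 -> R) (g2 h2 : K2 -> R) :
  nonnegf g1 -> nonnegf h2 -> same_distr g1 h1 -> same_distr g2 h2 ->
  same_distr (tensorf g1 g2) (tensorf h1 h2).
Proof.
move=> g1_ge0 h2_ge0 g1h1 g2h2 t t_gt0.
apply: (card_eq_trans (B := [set z | t <= g1 z.1 * h2 z.2])).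
  by apply: card_eq_fibers => x; exact: (same_distrZ (g1_ge0 x) g2h2 t_gt0).
have swap_l (w : K1 -> R) :
    [set z : K2 * K1 | t <= w z.2 * h2 z.1] #= [set z | t <= w z.1 * h2 z.2].
  exact: (card_eq_swap [set z | t <= w z.1 * h2 z.2]).
apply: (card_eq_trans (B := [set z : K2 * K1 | t <= g1 z.2 * h2 z.1])).
  by rewrite card_eq_sym.
apply: card_eq_trans (swap_l h1); apply: card_eq_fibers => y /=.
have e (w : K1 -> R) : [set x | t <= w x * h2 y] = [set x | t <= h2 y * w x].
  by apply/seteqP; split => x /=; rewrite mulrC.
rewrite !e; exact: (same_distrZ (h2_ge0 y) g1h1 t_gt0).
Qed.

End Distribution.

Section MaxConvolution.
Variables (R : realType) (K : zmodType).
Implicit Types f g : K -> R.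

Definition bounded_nonneg (T : Type) (u : T -> R) :=
  nonnegf u /\ exists M, forall x, u x <= M.

Lemma nonneg_l1_bounded f : nonneg_l1 f -> bounded_nonneg f.
Proof.
by move=> f_l1; split; [case: f_l1 | exists (l1norm f) => x; exact: l1norm_ge_term].
Qed.

Lemma maxconv_ge f g x t : bounded_nonneg f -> bounded_nonneg g ->
  f t * g (x - t) <= maxconv f g x.
Proof.
move=> [f_ge0 [Mf le_Mf]] [g_ge0 [Mg le_Mg]]; apply: ub_le_sup; last by exists t.
by exists (Mf * Mg) => _ [s _ <-]; apply: ler_pM.
Qed.

Lemma maxconv_le f g x M : (forall t, f t * g (x - t) <= M) -> maxconv f g x <= M.
Proof.
move=> le_M; apply: ge_sup; first by exists (f 0 * g (x - 0)), 0.
by move=> _ [t _ <-]; exact: le_M.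
Qed.

Lemma maxconv_ge0 f g x : bounded_nonneg f -> bounded_nonneg g -> 0 <= maxconv f g x.
Proof.
move=> f_bd g_bd; apply: le_trans (maxconv_ge x 0 f_bd g_bd).
by apply: mulr_ge0; [case: f_bd | case: g_bd].
Qed.

Lemma bounded_nonneg_maxconv f g :
  bounded_nonneg f -> bounded_nonneg g -> bounded_nonneg (maxconv f g).
Proof.
move=> f_bd g_bd; split; first by move=> x; exact: maxconv_ge0.
have [f_ge0 [Mf le_Mf]] := f_bd; have [g_ge0 [Mg le_Mg]] := g_bd.
by exists (Mf * Mg) => x; apply: maxconv_le => t; apply: ler_pM.
Qed.

Lemma mulr_maxconv_le f g x c M : 0 <= c -> 0 <= M ->
  (forall t, c * (f t * g (x - t)) <= M) -> c * maxconv f g x <= M.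
Proof.
rewrite le_eqVlt => /predU1P[<- M_ge0 _|c_gt0 _ le_M]; first by rewrite mul0r.
rewrite mulrC -ler_pdivlMr //; apply: maxconv_le => t.
by rewrite ler_pdivlMr // mulrC.
Qed.

Lemma sumE_maxconv_le f g : bounded_nonneg f -> bounded_nonneg g ->
  (sumE (maxconv f g) <= sumE f * sumE g)%E.
Proof.
move=> f_bd g_bd; have [f_ge0 _] := f_bd; have [g_ge0 _] := g_bd.
have fg_ge0 x t : 0 <= f t * g (x - t) by apply: mulr_ge0.
have le_sum x : ((maxconv f g x)%:E <= sumE (fun t => (f t * g (x - t))%R))%E.
  case E: (sumE _) (sumE_ge0 (fg_ge0 x)) => [s| |] // _; last by rewrite leey.
  rewrite lee_fin; apply: maxconv_le => t; rewrite -lee_fin -E.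
  exact: sumE_ge_term.
apply: le_trans (le_esum (fun x _ => le_sum x)) _.
rewrite esum_swap; last by move=> *; rewrite lee_fin.
rewrite -sumE_tensor // {1}/sumE esum_pair; last by move=> z; rewrite lee_fin mulr_ge0.
apply: le_esum => t _; rewrite (esum_translate (fun x => (f t * g x)%:E)).
exact: lexx.
Qed.

Lemma nonneg_l1_maxconv f g : nonneg_l1 f -> nonneg_l1 g -> nonneg_l1 (maxconv f g).
Proof.
move=> f_l1 g_l1; have f_bd := nonneg_l1_bounded f_l1; have g_bd := nonneg_l1_bounded g_l1.
apply: nonneg_l1_lty; first by move=> x; exact: maxconv_ge0.
apply: le_lt_trans (sumE_maxconv_le f_bd g_bd) _.
by rewrite !nonneg_l1_sumE // -EFinM ltry.
Qed.

End MaxConvolution.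

Section TensorMaxConvolution.
Variables (R : realType) (K1 K2 : zmodType).

Lemma bounded_nonneg_tensor (u : K1 -> R) (v : K2 -> R) :
  bounded_nonneg u -> bounded_nonneg v -> bounded_nonneg (tensorf u v).
Proof.
move=> [u_ge0 [Mu le_Mu]] [v_ge0 [Mv le_Mv]]; split; first by move=> z; apply: mulr_ge0.
by exists (Mu * Mv) => z; apply: ler_pM.
Qed.

Lemma maxconv_tensor (f1 g1 : K1 -> R) (f2 g2 : K2 -> R) :
  bounded_nonneg f1 -> bounded_nonneg g1 -> bounded_nonneg f2 -> bounded_nonneg g2 ->
  maxconv (tensorf f1 f2) (tensorf g1 g2) = tensorf (maxconv f1 g1) (maxconv f2 g2).
Proof.
move=> f1_bd g1_bd f2_bd g2_bd; apply/funext => -[x y]; apply/eqP; rewrite eq_le.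
have [[f1_ge0 _] [g1_ge0 _]] := (f1_bd, g1_bd).
have [[f2_ge0 _] [g2_ge0 _]] := (f2_bd, g2_bd).
apply/andP; split.
  apply: maxconv_le => -[t1 t2]; rewrite /tensorf /= mulrACA.
  by apply: ler_pM; rewrite ?mulr_ge0 ?maxconv_ge.
have F_bd := bounded_nonneg_tensor f1_bd f2_bd; have G_bd := bounded_nonneg_tensor g1_bd g2_bd.
rewrite /tensorf /= mulrC; apply: mulr_maxconv_le; rewrite ?maxconv_ge0 // => t1.
rewrite mulrC; apply: mulr_maxconv_le; rewrite ?mulr_ge0 ?maxconv_ge0 // => t2.
apply: le_trans (maxconv_ge (x, y) (t1, t2) F_bd G_bd).
by rewrite /tensorf /= mulrACA.
Qed.

End TensorMaxConvolution.

Section Fibers.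
Variables (R : realType) (K1 K2 : zmodType).
Implicit Types u : K1 * K2 -> R.

Definition fiber u (y : K2) : K1 -> R := fun x => u (x, y).

Definition fiber_norm (p : R) u : K2 -> R := fun y => lpnorm p (fiber u y).

Lemma sumE_fibers u : nonnegf u -> sumE u = \esum_(y in [set: K2]) sumE (fiber u y).
Proof.
move=> u_ge0; rewrite {1}/sumE esum_pair; last by move=> z; rewrite lee_fin.
by rewrite esum_swap // => x y; rewrite lee_fin.
Qed.

Lemma nonneg_l1_fiber u y : nonneg_l1 u -> nonneg_l1 (fiber u y).
Proof.
move=> u_l1; have [u_ge0 _] := u_l1.
apply: nonneg_l1_lty; first by move=> x; exact: u_ge0.
apply: le_lt_trans (_ : sumE u < +oo)%E; last by rewrite nonneg_l1_sumE // ltry.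
rewrite sumE_fibers //; apply: (esum_ge_term (a := fun y => sumE (fiber u y))) => y'.
by apply: sumE_ge0 => x; exact: u_ge0.
Qed.

Lemma nonneg_l1_fiber_norm p u : nonneg_l1 u -> 1 <= p -> nonneg_l1 (fiber_norm p u).
Proof.
move=> u_l1 p_ge1; have [u_ge0 _] := u_l1.
apply: nonneg_l1_lty; first by move=> y; exact: lpnorm_ge0.
apply: le_lt_trans (_ : sumE u < +oo)%E; last by rewrite nonneg_l1_sumE // ltry.
rewrite sumE_fibers //; apply: le_esum => y _; have uy_l1 := nonneg_l1_fiber y u_l1.
by rewrite nonneg_l1_sumE // lee_fin lpnorm_le_l1norm.
Qed.

Lemma lpnorm_fiber_norm p u : nonneg_l1 u -> 1 <= p ->
  lpnorm p (fiber_norm p u) = lpnorm p u.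
Proof.
move=> u_l1 p_ge1; have [u_ge0 _] := u_l1.
have p_neq0 : p != 0 by rewrite gt_eqF // (lt_le_trans ltr01).
rewrite !lpnormE //; last by move=> y; exact: lpnorm_ge0.
congr (fine _ `^ _); rewrite (sumE_fibers (u := fun z => u z `^ p)); last first.
  by move=> z; apply: powR_ge0.
apply: eq_esum => y _; have uy_l1 := nonneg_l1_fiber y u_l1.
rewrite /fiber_norm lpnormE; last by move=> x; exact: u_ge0.
by rewrite powRVK ?fine_ge0 ?sumE_ge0 // -?sumE_powR_fin // => x; apply: powR_ge0.
Qed.

End Fibers.

(* Unlike in gamma_p, g and h may vanish here, so that the bound applies to
   arbitrary fibres of functions on a product. *)
Definition gamma_lbound (R : realType) (K : zmodType) (p q r : R) (f : K -> R) :=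
  forall g h : K -> R, nonneg_l1 g -> nonneg_l1 h ->
  r * lpnorm p g * lpnorm q h <= l1norm (maxconv (maxconv f g) h).

Section TensorLowerBound.
Variables (R : realType) (K1 K2 : zmodType) (p q r1 r2 : R).
Variables (f1 : K1 -> R) (f2 : K2 -> R) (g h : K1 * K2 -> R).
Hypotheses (f1_l1 : nonneg_l1 f1) (f2_l1 : nonneg_l1 f2).
Hypotheses (g_l1 : nonneg_l1 g) (h_l1 : nonneg_l1 h).
Hypotheses (p_ge1 : 1 <= p) (q_ge1 : 1 <= q) (r1_ge0 : 0 <= r1).
Hypotheses (f1_lb : gamma_lbound p q r1 f1) (f2_lb : gamma_lbound p q r2 f2).

Let Phi := maxconv (maxconv (tensorf f1 f2) g) h.

Let Phi_l1 : nonneg_l1 Phi.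
Proof. exact/nonneg_l1_maxconv/h_l1/nonneg_l1_maxconv/g_l1/nonneg_l1_tensor. Qed.

Lemma maxconv_fiber_le a b c x :
  f2 a * maxconv (maxconv f1 (fiber g b)) (fiber h c) x <= Phi (x, a + b + c).
Proof.
have [f1_bd f2_bd] := (nonneg_l1_bounded f1_l1, nonneg_l1_bounded f2_l1).
have [g_bd h_bd] := (nonneg_l1_bounded g_l1, nonneg_l1_bounded h_l1).
have gb_bd := nonneg_l1_bounded (nonneg_l1_fiber b g_l1).
have hc_bd := nonneg_l1_bounded (nonneg_l1_fiber c h_l1).
have FG_bd := bounded_nonneg_maxconv (bounded_nonneg_tensor f1_bd f2_bd) g_bd.
have [[f2_ge0 _] [hc_ge0 _]] := (f2_bd, hc_bd).
have Phi_ge0 : 0 <= Phi (x, a + b + c) by case: Phi_l1.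
apply: (mulr_maxconv_le (f2_ge0 a) Phi_ge0) => s; rewrite mulrCA mulrC.
apply: (mulr_maxconv_le (mulr_ge0 (f2_ge0 a) (hc_ge0 _)) Phi_ge0) => t.
apply: le_trans (maxconv_ge (x, a + b + c) (s, a + b) FG_bd h_bd).
have -> : h ((x, a + b + c) - (s, a + b)) = fiber h c (x - s).
  by rewrite /fiber; congr (h (_, _)); rewrite addrC addKr.
have -> : f2 a * fiber h c (x - s) * (f1 t * fiber g b (s - t)) =
    tensorf f1 f2 (t, a) * g ((s, a + b) - (t, a)) * fiber h c (x - s).
  have -> : (s, a + b) - (t, a) = (s - t, a + b - a) :> K1 * K2 by [].
  by rewrite /tensorf /fiber /= [a + b]addrC addrK; ring.
apply: ler_wpM2r; first exact: hc_ge0.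
exact: maxconv_ge (bounded_nonneg_tensor f1_bd f2_bd) g_bd.
Qed.

Let G := fiber_norm p g.
Let H := fiber_norm q h.
Let G_l1 : nonneg_l1 G. Proof. exact: nonneg_l1_fiber_norm. Qed.
Let H_l1 : nonneg_l1 H. Proof. exact: nonneg_l1_fiber_norm. Qed.

Lemma maxconv_fiber_norm_le y :
  r1 * maxconv (maxconv f2 G) H y <= l1norm (fiber Phi y).
Proof.
have [f2_bd G_bd] := (nonneg_l1_bounded f2_l1, nonneg_l1_bounded G_l1).
have [[f2_ge0 _] [H_ge0 _]] := (f2_bd, H_l1).
have Phiy_ge0 := l1norm_ge0 (fiber Phi y).
apply: (mulr_maxconv_le r1_ge0 Phiy_ge0) => s; rewrite mulrCA mulrC.
apply: (mulr_maxconv_le (mulr_ge0 r1_ge0 (H_ge0 _)) Phiy_ge0) => a.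
have -> : r1 * H (y - s) * (f2 a * G (s - a)) = f2 a * (r1 * G (s - a) * H (y - s)) by ring.
have [gsa_l1 hys_l1] := (nonneg_l1_fiber (s - a) g_l1, nonneg_l1_fiber (y - s) h_l1).
apply: le_trans (ler_wpM2l (f2_ge0 a) (f1_lb gsa_l1 hys_l1)) _.
have Phiy_l1 := nonneg_l1_fiber y Phi_l1.
apply: (l1normZ_le (f2_ge0 a) _ Phiy_l1) => [|x].
  exact/nonneg_l1_maxconv/hys_l1/nonneg_l1_maxconv.
by have := maxconv_fiber_le a (s - a) (y - s) x; rewrite !subrKC.
Qed.

Lemma tensor_lbound : r1 * r2 * lpnorm p g * lpnorm q h <= l1norm Phi.
Proof.
rewrite -(lpnorm_fiber_norm g_l1 p_ge1) -(lpnorm_fiber_norm h_l1 q_ge1) -/G -/H.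
have K_l1 := nonneg_l1_maxconv (nonneg_l1_maxconv f2_l1 G_l1) H_l1.
apply: le_trans (_ : r1 * l1norm (maxconv (maxconv f2 G) H) <= _).
  by rewrite -!mulrA ler_wpM2l // !mulrA; exact: f2_lb.
have [[K_ge0 _] [Phi_ge0 _]] := (K_l1, Phi_l1).
rewrite -lee_fin EFinM -!nonneg_l1_sumE // (sumE_fibers Phi_ge0) -sumEZ //.
apply: le_esum => y _; rewrite (nonneg_l1_sumE (nonneg_l1_fiber y Phi_l1)) lee_fin.
exact: maxconv_fiber_norm_le.
Qed.

End TensorLowerBound.

Lemma gamma_lbound_tensor (R : realType) (K1 K2 : zmodType) (p q r1 r2 : R)
    (f1 : K1 -> R) (f2 : K2 -> R) :
  nonneg_l1 f1 -> nonneg_l1 f2 -> 1 <= p -> 1 <= q -> 0 <= r1 ->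
  gamma_lbound p q r1 f1 -> gamma_lbound p q r2 f2 ->
  gamma_lbound p q (r1 * r2) (tensorf f1 f2).
Proof.
by move=> f1_l1 f2_l1 p_ge1 q_ge1 r1_ge0 f1_lb f2_lb g h g_l1 h_l1; exact: tensor_lbound.
Qed.

Section Infimum.
Variable R : realType.
Local Open Scope ereal_scope.

Lemma ereal_inf_fin (X : Type) (P : set X) (r : X -> R) :
  P !=set0 -> (forall x, P x -> (0 <= r x)%R) ->
  exists2 i, (0 <= i)%R & ereal_inf [set (r x)%:E | x in P] = i%:E.
Proof.
move=> [x0 Px0] r_ge0.
have inf_ge0 : 0 <= ereal_inf [set (r x)%:E | x in P].
  by apply: le_ereal_inf_tmp => _ [x Px <-]; rewrite lee_fin r_ge0.
have : ereal_inf [set (r x)%:E | x in P] <= (r x0)%:E by apply: ereal_inf_lbound; exists x0.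
by case: (ereal_inf _) inf_ge0 => [i| |] // i_ge0 _; exists i; rewrite -?lee_fin.
Qed.

Lemma le_mul_ereal_inf (X : Type) (P : set X) (r : X -> R) (a c i : R) :
  ereal_inf [set (r x)%:E | x in P] = i%:E -> (0 <= a)%R -> P !=set0 ->
  (forall x, P x -> c <= a * r x)%R -> (c <= a * i)%R.
Proof.
rewrite le_eqVlt => inf_i /predU1P[<- [x0 Px0] le_c|a_gt0 _ le_c].
  by rewrite mul0r; have := le_c x0 Px0; rewrite mul0r.
rewrite mulrC -ler_pdivrMr // -lee_fin -inf_i; apply: le_ereal_inf_tmp => _ [x Px <-].
by rewrite lee_fin ler_pdivrMr // mulrC le_c.
Qed.

Lemma ereal_inf_le_mul (X1 X2 X : Type) (P1 : set X1) (P2 : set X2) (P : set X)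
    (r1 : X1 -> R) (r2 : X2 -> R) (r : X -> R) :
  P1 !=set0 -> P2 !=set0 ->
  (forall x, P1 x -> (0 <= r1 x)%R) -> (forall y, P2 y -> (0 <= r2 y)%R) ->
  (forall x y, P1 x -> P2 y -> exists2 z, P z & r z = (r1 x * r2 y)%R) ->
  ereal_inf [set (r z)%:E | z in P] <=
    ereal_inf [set (r1 x)%:E | x in P1] * ereal_inf [set (r2 y)%:E | y in P2].
Proof.
move=> P1_neq0 P2_neq0 r1_ge0 r2_ge0 r_prod.
have [i1 i1_ge0 inf1] := ereal_inf_fin P1_neq0 r1_ge0.
have [i2 _ inf2] := ereal_inf_fin P2_neq0 r2_ge0.
have inf_le_prod x y :
    P1 x -> P2 y -> ereal_inf [set (r z)%:E | z in P] <= (r1 x * r2 y)%:E.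
  move=> P1x P2y; have [z Pz <-] := r_prod x y P1x P2y.
  by apply: ereal_inf_lbound; exists z.
have [[x0 P1x0] [y0 P2y0]] := (P1_neq0, P2_neq0).
rewrite inf1 inf2 -EFinM.
move: inf_le_prod (inf_le_prod x0 y0 P1x0 P2y0).
case: (ereal_inf _) => [c le_c _| //|_ _]; last exact: leNye.
rewrite lee_fin; apply: (le_mul_ereal_inf inf2) => // y P2y.
rewrite mulrC; apply: (le_mul_ereal_inf inf1) => // [|x P1x]; first exact: r2_ge0.
by rewrite mulrC -lee_fin le_c.
Qed.

End Infimum.

Section Gamma.
Context {R : realType} {K : zmodType}.
Implicit Types f g h : K -> R.

Definition delta0 : K -> R := fun x => (x == 0)%:R.

Lemma nonneg_l1_delta0 : nonneg_l1 delta0.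
Proof.
have delta0_ge0 : nonnegf delta0 by move=> x; exact: ler0n.
apply: nonneg_l1_lty => //; rewrite /sumE (esumID [set 0]); last first.
  by move=> x _; rewrite lee_fin.
rewrite setTI esum_set1 ?lee_fin // esum1 ?adde0 ?ltry // => x [_ /eqP x_neq0].
by rewrite /delta0 (negPf x_neq0).
Qed.

Lemma delta0_neq0 : delta0 <> (fun=> 0).
Proof. by move=> /(congr1 (fun u => u 0)) /eqP; rewrite /delta0 eqxx oner_eq0. Qed.

Lemma ratio_ge0 f g h a b :
  0 <= l1norm (maxconv (maxconv f g) h) / (lpnorm a g * lpnorm b h).
Proof. by rewrite divr_ge0 ?l1norm_ge0 // mulr_ge0 // lpnorm_ge0. Qed.

Lemma gamma_p_fin p f : exists2 r, 0 <= r & gamma_p p f = r%:E.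
Proof.
apply: ereal_inf_fin => [|gh _]; last exact: ratio_ge0.
exists (delta0, delta0).
exact: (conj nonneg_l1_delta0 (conj delta0_neq0 (conj nonneg_l1_delta0 delta0_neq0))).
Qed.

Lemma conj_exp_ge1 (p : R) : 1 < p -> 1 <= conj_exp p.
Proof. by move=> p_gt1; rewrite /conj_exp ler_pdivlMr ?subr_gt0 // mul1r gerBl. Qed.

Lemma gamma_lbound_gamma_p p f r : 1 < p -> gamma_p p f = r%:E ->
  gamma_lbound p (conj_exp p) r f.
Proof.
move=> p_gt1 gamma_r g h g_l1 h_l1.
have [p_ge1 q_ge1] := (ltW p_gt1, conj_exp_ge1 p_gt1).
have [->|g_neq0] := pselect (g = fun=> 0).
  by rewrite lpnorm_cst0 ?mulr0 ?mul0r ?l1norm_ge0 // gt_eqF // (lt_trans ltr01).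
have [->|h_neq0] := pselect (h = fun=> 0).
  by rewrite lpnorm_cst0 ?mulr0 ?l1norm_ge0 // gt_eqF // (lt_le_trans ltr01).
have : (gamma_p p f <= (l1norm (maxconv (maxconv f g) h) /
                          (lpnorm p g * lpnorm (conj_exp p) h))%:E)%E.
  by apply: ereal_inf_lbound; exists (g, h).
by rewrite gamma_r lee_fin -mulrA ler_pdivlMr // mulr_gt0 // lpnorm_gt0.
Qed.

Lemma le_gamma_p p f r : 1 < p -> gamma_lbound p (conj_exp p) r f ->
  (r%:E <= gamma_p p f)%E.
Proof.
move=> p_gt1 f_lb; have [p_ge1 q_ge1] := (ltW p_gt1, conj_exp_ge1 p_gt1).
apply: le_ereal_inf_tmp => _ [[g h] /= [g_l1 [g_neq0 [h_l1 h_neq0]]] <-].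
by rewrite lee_fin ler_pdivlMr ?mulrA ?f_lb // mulr_gt0 // lpnorm_gt0.
Qed.

End Gamma.

Section TensorUpperBounds.
Variables (R : realType) (K1 K2 : zmodType).

Lemma ratio_tensor (f1 g1 h1 : K1 -> R) (f2 g2 h2 : K2 -> R) (a b : R) :
  nonneg_l1 f1 -> nonneg_l1 g1 -> nonneg_l1 h1 ->
  nonneg_l1 f2 -> nonneg_l1 g2 -> nonneg_l1 h2 ->
  l1norm (maxconv (maxconv (tensorf f1 f2) (tensorf g1 g2)) (tensorf h1 h2)) /
    (lpnorm a (tensorf g1 g2) * lpnorm b (tensorf h1 h2)) =
  l1norm (maxconv (maxconv f1 g1) h1) / (lpnorm a g1 * lpnorm b h1) *
  (l1norm (maxconv (maxconv f2 g2) h2) / (lpnorm a g2 * lpnorm b h2)).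
Proof.
move=> f1_l1 g1_l1 h1_l1 f2_l1 g2_l1 h2_l1.
have [fgh1_ge0 _] := nonneg_l1_maxconv (nonneg_l1_maxconv f1_l1 g1_l1) h1_l1.
have [fgh2_ge0 _] := nonneg_l1_maxconv (nonneg_l1_maxconv f2_l1 g2_l1) h2_l1.
have [[[f1_bd g1_bd] h1_bd] [[f2_bd g2_bd] h2_bd]] :=
  ((nonneg_l1_bounded f1_l1, nonneg_l1_bounded g1_l1, nonneg_l1_bounded h1_l1),
   (nonneg_l1_bounded f2_l1, nonneg_l1_bounded g2_l1, nonneg_l1_bounded h2_l1)).
rewrite (maxconv_tensor f1_bd g1_bd f2_bd g2_bd).
rewrite (maxconv_tensor (bounded_nonneg_maxconv f1_bd g1_bd) h1_bd
                       (bounded_nonneg_maxconv f2_bd g2_bd) h2_bd).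
rewrite l1norm_tensor // !lpnorm_tensor; first by rewrite mulf_div mulrACA.
all: by [case: g1_l1 | case: g2_l1 | case: h1_l1 | case: h2_l1].
Qed.

Lemma nonzero_l1_tensor (u : K1 -> R) (v : K2 -> R) :
  nonneg_l1 u -> u <> (fun=> 0) -> nonneg_l1 v -> v <> (fun=> 0) ->
  nonneg_l1 (tensorf u v) /\ tensorf u v <> (fun=> 0).
Proof. by move=> *; split; [exact: nonneg_l1_tensor | exact: tensor_neq0]. Qed.

Variables (f1 : K1 -> R) (f2 : K2 -> R).
Hypotheses (f1_l1 : nonneg_l1 f1) (f2_l1 : nonneg_l1 f2).

Lemma gamma_p_tensor_le p :
  (gamma_p p (tensorf f1 f2) <= gamma_p p f1 * gamma_p p f2)%E.
Proof.
apply: ereal_inf_le_mul; try by move=> *; exact: ratio_ge0.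
1,2: exists (delta0, delta0).
1,2: exact: (conj nonneg_l1_delta0 (conj delta0_neq0 (conj nonneg_l1_delta0 delta0_neq0))).
move=> [g1 h1] [g2 h2] /= [g1_l1 [g1_neq0 [h1_l1 h1_neq0]]].
move=> [g2_l1 [g2_neq0 [h2_l1 h2_neq0]]].
exists (tensorf g1 g2, tensorf h1 h2); last exact: ratio_tensor.
have [gg_l1 gg_neq0] := nonzero_l1_tensor g1_l1 g1_neq0 g2_l1 g2_neq0.
by have [hh_l1 hh_neq0] := nonzero_l1_tensor h1_l1 h1_neq0 h2_l1 h2_neq0.
Qed.

Lemma gamma'_tensor_le : (gamma' (tensorf f1 f2) <= gamma' f1 * gamma' f2)%E.
Proof.
apply: ereal_inf_le_mul; try by move=> *; exact: ratio_ge0.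
1,2: exists (delta0, delta0).
1,2: exact: (conj nonneg_l1_delta0 (conj delta0_neq0 (conj nonneg_l1_delta0
  (conj delta0_neq0 (fun t _ => card_eqxx _))))).
move=> [g1 h1] [g2 h2] /= [g1_l1 [g1_neq0 [h1_l1 [h1_neq0 g1h1]]]].
move=> [g2_l1 [g2_neq0 [h2_l1 [h2_neq0 g2h2]]]].
exists (tensorf g1 g2, tensorf h1 h2); last exact: ratio_tensor.
have [gg_l1 gg_neq0] := nonzero_l1_tensor g1_l1 g1_neq0 g2_l1 g2_neq0.
have [hh_l1 hh_neq0] := nonzero_l1_tensor h1_l1 h1_neq0 h2_l1 h2_neq0.
do 4 split => //; apply: same_distr_tensor => //; [by case: g1_l1 | by case: h2_l1].
Qed.

Lemma gamma''_tensor_le : (gamma'' (tensorf f1 f2) <= gamma'' f1 * gamma'' f2)%E.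
Proof.
apply: ereal_inf_le_mul => [||g _|g _|g1 g2 /= [g1_l1 g1_neq0] [g2_l1 g2_neq0]].
- by exists delta0; exact: (conj nonneg_l1_delta0 delta0_neq0).
- by exists delta0; exact: (conj nonneg_l1_delta0 delta0_neq0).
- by rewrite divr_ge0 ?l1norm_ge0 ?exprn_ge0 ?lpnorm_ge0.
- by rewrite divr_ge0 ?l1norm_ge0 ?exprn_ge0 ?lpnorm_ge0.
exists (tensorf g1 g2); first exact: nonzero_l1_tensor.
by rewrite !expr2 ratio_tensor.
Qed.

End TensorUpperBounds.

Unset Implicit Arguments.
Set Strict Implicit.

Theorem mainTheorem11 (R : realType) (G1 G2 : zmodType)
  (f1 : G1 -> R) (f2 : G2 -> R) (p : R) :
  nonneg_l1 f1 -> nonneg_l1 f2 -> 1 < p ->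
  [/\ gamma_p p (tensorf f1 f2) = (gamma_p p f1 * gamma_p p f2)%E,
      (gamma' (tensorf f1 f2) <= gamma' f1 * gamma' f2)%E &
      (gamma'' (tensorf f1 f2) <= gamma'' f1 * gamma'' f2)%E].
Proof.
move=> f1_l1 f2_l1 p_gt1; split; last 2 first.
- exact: gamma'_tensor_le.
- exact: gamma''_tensor_le.
apply/eqP; rewrite eq_le gamma_p_tensor_le //=.
have [r1 r1_ge0 gamma_r1] := gamma_p_fin p f1.
have [r2 _ gamma_r2] := gamma_p_fin p f2.
rewrite gamma_r1 gamma_r2 -EFinM; apply: le_gamma_p => //.
apply: gamma_lbound_tensor => //.
- exact: ltW.
- exact: conj_exp_ge1.
- exact: gamma_lbound_gamma_p p_gt1 gamma_r1.
- exact: gamma_lbound_gamma_p p_gt1 gamma_r2.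
Qed.
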